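(* Let $G$ be a symmetrically factorizable Lie group with subgroups $G_\pm$ and conjugating element $\theta$. If $\theta^2$ admits a unique factorization $\theta^2=(\theta^2)_+(\theta^2)_-^{-1}$ with $(\theta^2)_\pm\in G_\pm$, then $\tilde\theta:=(\theta^2)_+^{-1}\theta$ is also a conjugating element and it is unipotent.
   Context: A Lie group $G$ with Lie algebra $\mathfrak g$ is symmetrically factorizable if $\mathfrak g=\mathfrak g_+\oplus\mathfrak g_-$ as a vector space, where $\mathfrak g_\pm$ are Lie subalgebras, and there is an element $\theta\in G$ (a conjugating element) with $\theta G_-=G_+\theta$, where $G_\pm$ are the Lie subgroups corresponding to $\mathfrak g_\pm$. For $g$ in an open dense neighbourhood of the identity one writes $g=g_+g_-^{-1}$ with $g_\pm\in G_\pm$. Here ``$\tilde\theta$ is unipotent'' is used in the sense $\tilde\theta^2=1$. *)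

(* abstract (possibly infinite) groups, no Lie structure. *)
Set Implicit Arguments.

Record Group := {
  carrier :> Type;
  gmul : carrier -> carrier -> carrier;
  gone : carrier;
  ginv : carrier -> carrier;
  gmulA : forall x y z, gmul x (gmul y z) = gmul (gmul x y) z;
  gmul1l : forall x, gmul gone x = x;
  gmul1r : forall x, gmul x gone = x;
  gmulVl : forall x, gmul (ginv x) x = gone;
  gmulVr : forall x, gmul x (ginv x) = gone
}.

Arguments gmul {g}.
Arguments gone {g}.
Arguments ginv {g}.

Definition is_subgroup (G : Group) (H : G -> Prop) : Prop :=
  H gone /\ (forall x y, H x -> H y -> H (gmul x y)) /\ (forall x, H x -> H (ginv x)).

Definition conjugating (G : Group) (Gp Gm : G -> Prop) (theta : G) : Prop :=
  forall g : G, (exists h, Gm h /\ g = gmul theta h) <-> (exists k, Gp k /\ g = gmul k theta).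

Definition unique_factorization (G : Group) (Gp Gm : G -> Prop) (g : G) : Prop :=
  exists p m, (Gp p /\ Gm m /\ g = gmul p (ginv m)) /\
    forall p' m', Gp p' -> Gm m' -> g = gmul p' (ginv m') -> p' = p /\ m' = m.

(* "unipotent" in the paper's sense: x^2 = 1. *)
Definition unipotent (G : Group) (x : G) : Prop := gmul x x = gone.

Arguments is_subgroup {G}.
Arguments conjugating {G}.
Arguments unique_factorization {G}.
Arguments unipotent {G}.


Set Implicit Arguments.
Unset Strict Implicit.

(* Left multiplication by an element of G_+ preserves conjugating elements,
   so t := (θ^2)_+^{-1} θ is conjugating.  Since t ∈ G_+ θ = θ G_-, its square
   t^2 = (θ^2)_-^{-1} (θ^{-1} t) lies in G_-; as t^2 commutes with t, the
   relation t G_- = G_+ t puts t^2 in G_+ as well.  Finally, uniqueness of the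
   factorization θ^2 = p m^{-1} forces G_+ ∩ G_- = 1, because θ^2 = (p u)(m u)^{-1}
   for every u in the intersection. *)

Section GroupFacts.

Variable G : Group.

Local Notation "x * y" := (@gmul G x y).
Local Notation "x ^-1" := (@ginv G x) (at level 2, left associativity, format "x ^-1").

Lemma gmul_cancel_l (a x y : G) : a * x = a * y -> x = y.
Proof.
  intro E.
  rewrite <- (gmul1l _ x), <- (gmul1l _ y), <- (gmulVl _ a), <- !gmulA, E.
  reflexivity.
Qed.

Lemma gmul_cancel_r (a x y : G) : x * a = y * a -> x = y.
Proof.
  intro E.
  rewrite <- (gmul1r _ x), <- (gmul1r _ y), <- (gmulVr _ a), !gmulA, E.
  reflexivity.
Qed.

Lemma gmulKV (a x : G) : a^-1 * (a * x) = x.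
Proof. rewrite gmulA, gmulVl, gmul1l. reflexivity. Qed.

Lemma gmulVK (a x : G) : a * (a^-1 * x) = x.
Proof. rewrite gmulA, gmulVr, gmul1l. reflexivity. Qed.

Lemma ginv_mul (x y : G) : (x * y)^-1 = y^-1 * x^-1.
Proof.
  apply (gmul_cancel_l (a := x * y)).
  rewrite gmulVr, <- gmulA, gmulVK, gmulVr.
  reflexivity.
Qed.

End GroupFacts.

Section Factorization.

Variable G : Group.
Variables Gp Gm : G -> Prop.
Hypothesis hGp : is_subgroup Gp.
Hypothesis hGm : is_subgroup Gm.

Local Notation "x * y" := (@gmul G x y).
Local Notation "x ^-1" := (@ginv G x) (at level 2, left associativity, format "x ^-1").

Lemma conjugating_mull (p theta : G) :
  Gp p -> conjugating Gp Gm theta -> conjugating Gp Gm (p * theta).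
Proof.
  destruct hGp as [_ [Gp_mul Gp_inv]].
  intros hp htheta g; split.
  - intros [h [hh ->]].
    destruct (proj1 (htheta (theta * h)) (ex_intro _ h (conj hh eq_refl)))
      as [k [hk Ek]].
    exists (p * k * p^-1); split.
    + apply Gp_mul; [apply Gp_mul |]; auto.
    + rewrite <- gmulA, Ek, <- !gmulA, gmulKV.
      reflexivity.
  - intros [k [hk ->]].
    destruct (proj2 (htheta (p^-1 * k * p * theta)))
      as [h [hh Eh]].
    { exists (p^-1 * k * p); split; [| reflexivity].
      apply Gp_mul; [apply Gp_mul |]; auto. }
    exists h; split; [exact hh |].
    rewrite <- gmulA, <- Eh, !gmulA, gmulVr, gmul1l.
    reflexivity.
Qed.

Lemma conjugating_commute_Gp (theta x : G) :
  conjugating Gp Gm theta -> Gm x -> theta * x = x * theta -> Gp x.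
Proof.
  intros htheta hx Ecomm.
  destruct (proj1 (htheta (theta * x)) (ex_intro _ x (conj hx eq_refl)))
    as [k [hk Ek]].
  rewrite Ecomm in Ek.
  rewrite (gmul_cancel_r Ek).
  exact hk.
Qed.

Lemma unique_factorization_meet_trivial (g u : G) :
  unique_factorization Gp Gm g -> Gp u -> Gm u -> u = gone.
Proof.
  destruct hGp as [_ [Gp_mul _]]. destruct hGm as [_ [Gm_mul _]].
  intros [p [m [[hp [hm Eg]] huniq]]] hup hum.
  destruct (huniq (p * u) (m * u)) as [Ep _].
  - apply Gp_mul; assumption.
  - apply Gm_mul; assumption.
  - rewrite Eg, ginv_mul, gmulA, <- (gmulA _ p), gmulVr, gmul1r.
    reflexivity.
  - apply (gmul_cancel_l (a := p)).
    rewrite Ep, gmul1r.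
    reflexivity.
Qed.

End Factorization.

Theorem mainTheorem5 (G : Group) (Gp Gm : G -> Prop)
  (hGp : is_subgroup Gp) (hGm : is_subgroup Gm)
  (theta : G) (htheta : conjugating Gp Gm theta)
  (hfac : unique_factorization Gp Gm (gmul theta theta))
  (tp tm : G) (htp : Gp tp) (htm : Gm tm)
  (hdec : gmul theta theta = gmul tp (ginv tm)) :
  conjugating Gp Gm (gmul (ginv tp) theta) /\ unipotent (gmul (ginv tp) theta).
Proof.
  set (t := gmul (ginv tp) theta).
  assert (htp_inv : Gp (ginv tp)) by (apply hGp; exact htp).
  assert (ht : conjugating Gp Gm t) by exact (conjugating_mull hGp htp_inv htheta).
  split; [exact ht |].
  destruct (proj2 (htheta t) (ex_intro _ (ginv tp) (conj htp_inv eq_refl)))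
    as [c [hc Ec]].
  assert (Esq : gmul t t = gmul (ginv tm) c).
  { transitivity (gmul t (gmul theta c)); [rewrite <- Ec; reflexivity |].
    unfold t.
    rewrite gmulA, <- (gmulA _ (ginv tp)), hdec, gmulA, gmulVl, gmul1l.
    reflexivity. }
  assert (hsq_m : Gm (gmul t t)).
  { rewrite Esq. apply hGm; [apply hGm |]; assumption. }
  assert (hsq_p : Gp (gmul t t)).
  { apply (conjugating_commute_Gp ht hsq_m). apply gmulA. }
  exact (unique_factorization_meet_trivial hGp hGm hfac hsq_p hsq_m).
Qed.
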